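(* Let $E,F,G$ be finite-dimensional Hilbert spaces with fixed orthonormal bases, and set $R=E$, $S=F\otimes G$, $A=E\otimes F$, $B=G$, so that $R\otimes S=A\otimes B=E\otimes F\otimes G$. Let $U$ be any unitary on $E\otimes F\otimes G$, let $|0\rangle\in R$ be a fixed basis vector, and define channels from $S$ to $A$ by $$\mathcal N(\rho)=\operatorname{Tr}_B\big[U(|0\rangle\langle 0|^R\otimes\rho)U^\dagger\big],\qquad \bar{\mathcal N}(\rho)=\operatorname{Tr}_B\big[\bar U(|0\rangle\langle 0|^R\otimes\rho)U^T\big],$$ where $\bar U$ is the entrywise complex conjugate of $U$ in the product basis and $U^T$ its transpose. Let $S_1,S_2$ be two copies of $S$ and $|\Phi\rangle^{S_1S_2}=|S|^{-1/2}\sum_{i}|i\rangle|i\rangle$ the maximally entangled state in the fixed basis. Then the state $(\mathcal N\otimes\bar{\mathcal N})(|\Phi\rangle\langle\Phi|^{S_1S_2})$ on $A_1\otimes A_2$ has an eigenvalue at least $$\frac{|S|}{|A||B|}=\frac{1}{|E|}.$$ More precisely, $\langle\Phi|^{A_1A_2}(\mathcal N\otimes\bar{\mathcal N})(\Phi^{S_1S_2})|\Phi\rangle^{A_1A_2}\ge 1/|E|$, where $|\Phi\rangle^{A_1A_2}$ is the maximally entangled state on two copies of $A$ in the fixed basis.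
   Context: $|X|$ denotes the dimension of $X$. Here $\mathcal N$ acts on $S_1$ with output $A_1$ (using $U$ on $E_1F_1G_1$) and $\bar{\mathcal N}$ acts on $S_2$ with output $A_2$ (using $\bar U$ on $E_2F_2G_2$). *)

(* Operators on finite-dimensional Hilbert spaces with a fixed
   orthonormal basis indexed by a finType T are written as matrices T -> T -> C,
   where C is an arbitrary numClosedFieldType (e.g. algC). *)
From HB Require Import structures.
From mathcomp Require Import all_boot all_order all_algebra.
Set Implicit Arguments. Unset Strict Implicit. Unset Printing Implicit Defensive.
Import Order.TTheory GRing.Theory Num.Theory.
Local Open Scope ring_scope.

Section QInfo.
Variable C : numClosedFieldType.

Definition op (T : finType) := T -> T -> C.
Definition vect (T : finType) := T -> C.

Definition id_op (T : finType) : op T := fun i j => (i == j)%:R.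
Definition mulop (T : finType) (X Y : op T) : op T :=
  fun i j => \sum_(k : T) X i k * Y k j.
Definition adj (T : finType) (X : op T) : op T := fun i j => (X j i)^*.
Definition conjop (T : finType) (X : op T) : op T := fun i j => (X i j)^*.
Definition trop (T : finType) (X : op T) : op T := fun i j => X j i.

Definition unitary (T : finType) (U : op T) : Prop :=
  (forall i j, mulop U (adj U) i j = @id_op T i j) /\
  (forall i j, mulop (adj U) U i j = @id_op T i j).

Definition ptrace2 (T1 T2 : finType) (X : op (T1 * T2)%type) : op T1 :=
  fun i j => \sum_(k : T2) X (i, k) (j, k).

Definition kron (T1 T2 : finType) (X : op T1) (Y : op T2) : op (T1 * T2)%type :=
  fun x y => X x.1 y.1 * Y x.2 y.2.

Definition unit_op (T : finType) (i j : T) : op T :=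
  fun x y => ((x == i) && (y == j))%:R.

(* tensor product N1 (x) N2 of two linear maps on operators, defined by
   linearity from its action on product matrix units *)
Definition tensor_map (S1 S2 A1 A2 : finType)
  (N1 : op S1 -> op A1) (N2 : op S2 -> op A2) (X : op (S1 * S2)%type) : op (A1 * A2)%type :=
  fun x y => \sum_(p : S1 * S2) \sum_(q : S1 * S2)
     X p q * kron (N1 (unit_op p.1 q.1)) (N2 (unit_op p.2 q.2)) x y.

(* |0><0|^R (x) rho, with R = E, S = F (x) G, viewed on E (x) F (x) G
   (basis index ((e, f), g)) *)
Definition embed0 (E F G : finType) (e0 : E) (rho : op (F * G)%type) : op (E * F * G)%type :=
  fun x y => ((x.1.1 == e0) && (y.1.1 == e0))%:R * rho (x.1.2, x.2) (y.1.2, y.2).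

Definition chanN (E F G : finType) (U : op (E * F * G)%type) (e0 : E)
  (rho : op (F * G)%type) : op (E * F)%type :=
  ptrace2 (mulop U (mulop (embed0 e0 rho) (adj U))).

Definition chanNbar (E F G : finType) (U : op (E * F * G)%type) (e0 : E)
  (rho : op (F * G)%type) : op (E * F)%type :=
  ptrace2 (mulop (conjop U) (mulop (embed0 e0 rho) (trop U))).

Definition maxent (T : finType) : vect (T * T)%type :=
  fun p => (p.1 == p.2)%:R / sqrtC (#|T|%:R).

Definition proj (T : finType) (v : vect T) : op T := fun x y => v x * (v y)^*.

Definition expect (T : finType) (v : vect T) (X : op T) : C :=
  \sum_(x : T) \sum_(y : T) (v x)^* * X x y * v y.

End QInfo.

From HB Require Import structures.
From mathcomp Require Import all_boot all_order all_algebra ring.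
Import Order.TTheory GRing.Theory Num.Theory.
Local Open Scope ring_scope.

(* Write W a g s := U (a, g) ((e0, s.1), s.2) for a in A = E x F,
   g in B = G and s in S = F x G, and let M be the |G| x |G| Gram-type matrix
   M g h = sum_(a, s) W a g s * conj (W a h s).
   1. Both maximally entangled vectors reduce the expectation to a sum over the
      diagonal index pairs, giving the weight 1 / (|A| |S|).
   2. On matrix units, N(|s><s'|)_(a,a') = sum_g W a g s conj (W a' g s') and
      N-bar gives the complex conjugate expression, so the expectation equals
      (|A| |S|)^-1 * sum_(g,h) |M g h|^2.
   3. Unitarity of U makes the columns W _ _ s unit vectors, so tr M = |S|;
      M has a nonnegative diagonal, hence by Cauchy-Schwarz
      sum_(g,h) |M g h|^2 >= sum_g (M g g)^2 >= |S|^2 / |G|.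
   Combining, the expectation is at least |S| / (|A| |G|) = 1 / |E|. *)

Lemma sum_pair_diag (R : nmodType) (T : finType) (h : T * T -> R) :
  \sum_(p : T * T) h p *+ (p.1 == p.2) = \sum_i h (i, i).
Proof.
rewrite (eq_bigr (fun p => h (p.1, p.2) *+ (p.1 == p.2))); last by case.
rewrite -(pair_big predT predT (fun i j => h (i, j) *+ (i == j))) /=.
apply: eq_bigr => i _; rewrite (bigD1 i) //= eqxx mulr1n big1 ?addr0 //.
by move=> j; rewrite eq_sym => /negbTE ->; rewrite mulr0n.
Qed.

Lemma sqr_sum_le (R : numFieldType) (G : finType) (x : G -> R) :
  (0 < #|G|)%N -> (forall g, x g \is Num.real) ->
  (\sum_g x g) ^+ 2 / #|G|%:R <= \sum_g x g ^+ 2.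
Proof.
move=> hG hr; set t := \sum_g x g.
have nG0 : (#|G|%:R : R) != 0 by rewrite pnatr_eq0 -lt0n.
have t_real : t \is Num.real by apply: rpred_sum => g _; exact: hr.
set m := t / #|G|%:R.
have m_real : m \is Num.real by rewrite rpredM // rpredV rpred_nat.
have var_ge0 : 0 <= \sum_g (x g - m) ^+ 2.
  by apply: sumr_ge0 => g _; rewrite -realEsqr rpredB.
rewrite (eq_bigr (fun g => x g ^+ 2 - (x g * m) *+ 2 + m ^+ 2)) in var_ge0;
  last by move=> g _; rewrite sqrrB.
rewrite big_split /= sumrB sumrMnl -mulr_suml sumr_const in var_ge0.
have sum_m : m ^+ 2 *+ #|G| = t * m.
  by rewrite -mulr_natr expr2 -mulrA /m divfK // mulrC.
rewrite sum_m mulr2n opprD addrA addrNK subr_ge0 in var_ge0.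
by rewrite expr2 -mulrA.
Qed.

(* The squared Frobenius norm of a matrix with nonnegative diagonal of trace n
   is at least n^2 / |G|: drop the off-diagonal terms, then Cauchy-Schwarz. *)
Lemma frobenius_trace_bound (C : numClosedFieldType) (G : finType)
    (M : G -> G -> C) (n : C) :
  (0 < #|G|)%N -> (forall g, 0 <= M g g) -> \sum_g M g g = n ->
  n ^+ 2 / #|G|%:R <= \sum_g \sum_h M g h * (M g h)^*.
Proof.
move=> hG M_ge0 trM; have M_real g : M g g \is Num.real by exact: ger0_real.
apply: (@le_trans _ _ (\sum_g M g g ^+ 2)).
  by rewrite -trM; exact: sqr_sum_le.
apply: ler_sum => g _; rewrite (bigD1 g) //= expr2 (conj_Creal (M_real g)).
by apply: ler_wpDr => //; apply: sumr_ge0 => h _; exact: mul_conjC_ge0.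
Qed.

Lemma gram_regroup (C : numClosedFieldType) (A S G : finType) (W : A -> G -> S -> C) :
  \sum_a \sum_a' \sum_s \sum_s'
     ((\sum_g W a g s * (W a' g s')^*) * (\sum_h (W a h s)^* * W a' h s'))
  = \sum_g \sum_h (\sum_a \sum_s W a g s * (W a h s)^*) *
                  (\sum_a \sum_s W a g s * (W a h s)^*)^*.
Proof.
pose X a a' s s' g h := W a g s * (W a' g s')^* * ((W a h s)^* * W a' h s').
transitivity (\sum_a \sum_a' \sum_s \sum_s' \sum_g \sum_h X a a' s s' g h).
  apply: eq_bigr => a _; apply: eq_bigr => a' _; apply: eq_bigr => s _.
  apply: eq_bigr => s' _; rewrite mulr_suml; apply: eq_bigr => g _.
  by rewrite mulr_sumr.
transitivity (\sum_g \sum_h \sum_a \sum_s \sum_a' \sum_s' X a a' s s' g h); last first.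
  apply: eq_bigr => g _; apply: eq_bigr => h _.
  rewrite rmorph_sum mulr_suml; apply: eq_bigr => a _.
  rewrite mulr_suml; apply: eq_bigr => s _.
  rewrite mulr_sumr; apply: eq_bigr => a' _.
  rewrite rmorph_sum mulr_sumr; apply: eq_bigr => s' _.
  by rewrite /X rmorphM /= conjCK mulrACA.
under eq_bigr => a _ do rewrite exchange_big.
under eq_bigr => a _ do under eq_bigr => s _ do
  under eq_bigr => a' _ do rewrite exchange_big.
under eq_bigr => a _ do under eq_bigr => s _ do rewrite exchange_big.
under eq_bigr => a _ do rewrite exchange_big.
rewrite exchange_big.
under eq_bigr => g _ do under eq_bigr => a _ do under eq_bigr => s _ do
  under eq_bigr => a' _ do rewrite exchange_big.
under eq_bigr => g _ do under eq_bigr => a _ do under eq_bigr => s _ do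
  rewrite exchange_big.
under eq_bigr => g _ do under eq_bigr => a _ do rewrite exchange_big.
by under eq_bigr => g _ do rewrite exchange_big.
Qed.

Section MaximallyEntangled.
Variable C : numClosedFieldType.

Lemma conj_maxent (T : finType) (p : T * T) : (@maxent C T p)^* = maxent C p.
Proof.
rewrite /maxent rmorphM rmorph_nat fmorphV /=.
by rewrite (conj_Creal (sqrtC_real (ler0n C #|T|))).
Qed.

Lemma sum_maxent2 (T : finType) (f : T * T -> T * T -> C) :
  \sum_(p : T * T) \sum_(q : T * T) maxent C p * maxent C q * f p q
  = (#|T|%:R)^-1 * \sum_i \sum_j f (i, i) (j, j).
Proof.
set k := (sqrtC (#|T|%:R : C))^-1.
have kk : k * k = (#|T|%:R)^-1 by rewrite -invfM -expr2 sqrtCK.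
rewrite -kk mulr_sumr.
under [RHS]eq_bigr do rewrite mulr_sumr.
rewrite -[RHS](@sum_pair_diag _ _ (fun p => \sum_j k * k * f p (j, j))).
apply: eq_bigr => p _; rewrite -(@sum_pair_diag _ _ (fun q => k * k * f p q)).
rewrite -mulr_natr mulr_suml; apply: eq_bigr => q _.
by rewrite -mulr_natr /maxent /k; ring.
Qed.

Lemma expect_maxent (T : finType) (X : op C (T * T)%type) :
  expect (@maxent C T) X = (#|T|%:R)^-1 * \sum_i \sum_j X (i, i) (j, j).
Proof.
rewrite -(@sum_maxent2 T X) /expect; apply: eq_bigr => p _; apply: eq_bigr => q _.
by rewrite conj_maxent mulrAC.
Qed.

Lemma tensor_map_maxent (S A1 A2 : finType)
    (N1 : op C S -> op C A1) (N2 : op C S -> op C A2) (x y : (A1 * A2)%type) :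
  tensor_map N1 N2 (proj (@maxent C S)) x y =
  (#|S|%:R)^-1 *
    \sum_i \sum_j kron (N1 (unit_op C i j)) (N2 (unit_op C i j)) x y.
Proof.
pose K (p q : S * S) :=
  kron (N1 (unit_op C p.1 q.1)) (N2 (unit_op C p.2 q.2)) x y.
transitivity (\sum_p \sum_q maxent C p * maxent C q * K p q).
  by apply: eq_bigr => p _; apply: eq_bigr => q _; rewrite /proj conj_maxent.
exact: (@sum_maxent2 S K).
Qed.

End MaximallyEntangled.

Section Channels.
Variables (C : numClosedFieldType) (E F G : finType) (e0 : E).

Definition embed_index (s : F * G) : E * F * G := ((e0, s.1), s.2).

Lemma embed0_unit_op (s s' : F * G) (k l : E * F * G) :
  embed0 e0 (unit_op C s s') k l =
  (k == embed_index s)%:R * (l == embed_index s')%:R.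
Proof.
case: k => [[k1 k2] k3]; case: l => [[l1 l2] l3]; case: s => s1 s2; case: s' => t1 t2.
rewrite /embed0 /unit_op /embed_index /= !xpair_eqE -!natrM !mulnb.
by case: (k1 == e0); case: (l1 == e0); rewrite ?andbF.
Qed.

Lemma ptrace_sandwich_unit_op (X Y : op C (E * F * G)%type) (s s' : F * G)
    (a a' : E * F) :
  ptrace2 (mulop X (mulop (embed0 e0 (unit_op C s s')) Y)) a a' =
  \sum_g X (a, g) (embed_index s) * Y (embed_index s') (a', g).
Proof.
rewrite /ptrace2 /mulop; apply: eq_bigr => g _.
rewrite (bigD1 (embed_index s)) //= [X in _ + X]big1 ?addr0; last first.
  move=> k /negbTE nk; rewrite big1 ?mulr0 // => l _.
  by rewrite embed0_unit_op nk !mul0r.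
congr (_ * _); rewrite (bigD1 (embed_index s')) //= [X in _ + X]big1 ?addr0.
  by rewrite embed0_unit_op !eqxx !mul1r.
by move=> l /negbTE nl; rewrite embed0_unit_op nl mulr0 mul0r.
Qed.

End Channels.
Arguments embed_index {E F G} e0 s.

Theorem lemma2 (C : numClosedFieldType) (E F G : finType) (e0 : E)
  (hF : (0 < #|F|)%N) (hG : (0 < #|G|)%N)
  (U : op C (E * F * G)%type) (hU : unitary U) :
  (#|E|%:R)^-1 <=
    expect (@maxent C (E * F)%type)
      (tensor_map (chanN U e0) (chanNbar U e0) (proj (@maxent C (F * G)%type))).
Proof.
pose W a g s := U (a, g) (embed_index e0 s).
pose M g h := \sum_a \sum_s W a g s * (W a h s)^*.
have M_ge0 g : 0 <= M g g.
  by apply: sumr_ge0 => a _; apply: sumr_ge0 => s _; exact: mul_conjC_ge0.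
(* unitarity: every column of U has unit norm, so tr M = |F x G| *)
have trM : \sum_g M g g = #|{: F * G}|%:R.
  rewrite exchange_big pair_bigA /= exchange_big /= -sum1_card natr_sum.
  apply: eq_bigr => s _; have := proj2 hU (embed_index e0 s) (embed_index e0 s).
  rewrite /mulop /adj /id_op eqxx => <-.
  by apply: eq_bigr => -[a g] _; exact: mulrC.
have expectE : expect (@maxent C _) (tensor_map (chanN U e0) (chanNbar U e0)
    (proj (@maxent C _))) = (#|{: E * F}|%:R)^-1 * ((#|{: F * G}|%:R)^-1 *
    \sum_g \sum_h M g h * (M g h)^*).
  rewrite expect_maxent /M -(@gram_regroup _ _ _ _ W); congr (_ * _).
  rewrite mulr_sumr; apply: eq_bigr => a _; rewrite mulr_sumr; apply: eq_bigr => a' _.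
  rewrite tensor_map_maxent /kron /chanN /chanNbar; congr (_ * _).
  by do 2!apply: eq_bigr => ? _; rewrite !ptrace_sandwich_unit_op.
have frobM := @frobenius_trace_bound _ _ M _ hG M_ge0 trM.
rewrite expectE; apply: le_trans (ler_wpM2l _ (ler_wpM2l _ frobM));
  rewrite ?invr_ge0 ?ler0n //.
have n_neq0 (T : finType) : (0 < #|T|)%N -> (#|T|%:R : C) != 0.
  by rewrite pnatr_eq0 -lt0n.
rewrite !card_prod !natrM le_eqVlt; apply/orP; left; apply/eqP; field.
by rewrite !n_neq0 //; apply/card_gt0P; exists e0.
Qed.
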